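(* Let $L$ be either $\mathbf{IL}^-(\mathbf{J2}_{+})$ or $\mathbf{CL}$. For any modal formula $A$ the following are equivalent: (i) $L\vdash A$; (ii) $A$ is valid in all simplified $L$-frames; (iii) $A$ is valid in all finite simplified $L$-frames. In particular, $\mathbf{CL}$ has the finite model property with respect to simplified $\mathbf{CL}$-frames.
   Context: Modal formulas are built from propositional variables, $\top$, $\bot$ using $\to,\lor,\land$, unary $\Box$ and binary $\rhd$; $\lnot A:=A\to\bot$, $\Diamond A:=\lnot\Box\lnot A$. The logic $\mathbf{IL}^-$ has as axioms all tautologies, $\Box(A\to B)\to(\Box A\to\Box B)$, $\Box(\Box A\to A)\to\Box A$, $(A\rhd C)\land(B\rhd C)\to(A\lor B)\rhd C$, and $\Box\lnot A\leftrightarrow A\rhd\bot$; its rules are modus ponens, necessitation, from $A\to B$ infer $C\rhd A\to C\rhd B$, and from $A\to B$ infer $B\rhd C\to A\rhd C$. $\mathbf{IL}^-(\mathbf{J2}_{+})$ is $\mathbf{IL}^-$ plus the axiom scheme $\mathbf{J2}_{+}$: $A\rhd(B\lor C)\land B\rhd C\to A\rhd C$. The logic $\mathbf{CL}$ has axioms: all tautologies, $\Box(A\to B)\to(\Box A\to\Box B)$, $\Box(\Box A\to A)\to\Box A$, $\Box(A\to B)\to A\rhd B$, $(A\rhd B)\land(B\rhd C)\to A\rhd C$, $(A\rhd C)\land(B\rhd C)\to(A\lor B)\rhd C$, $A\rhd B\to(\Diamond A\to\Diamond B)$, with rules modus ponens and necessitation. A simplified frame is $(W,R,S)$ with $W$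 non-empty, $R$ a transitive, conversely well-founded binary relation on $W$, $S$ a binary relation on $W$; it is finite if $W$ is. Forcing: arbitrary on variables, Boolean clauses as usual, $x\Vdash\Box A$ iff $y\Vdash A$ for all $y$ with $xRy$, and $x\Vdash A\rhd B$ iff for every $y$ with $xRy$ and $y\Vdash A$ there is $z$ with $xRz$, $ySz$, $z\Vdash B$. $A$ is valid in a frame if it is forced at every point under every forcing relation. A simplified $\mathbf{IL}^-(\mathbf{J2}_{+})$-frame is a simplified frame with $S$ transitive; a simplified $\mathbf{CL}$-frame is a simplified frame with $S$ reflexive and transitive. *)

From Stdlib Require Import List.

Inductive formula : Type :=
| Var : nat -> formula
| Top : formula
| Bot : formula
| Imp : formula -> formula -> formula
| Or  : formula -> formula -> formula
| And : formula -> formula -> formula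
| Box : formula -> formula
| Rhd : formula -> formula -> formula.

Definition Neg (A : formula) : formula := Imp A Bot.
Definition Dia (A : formula) : formula := Neg (Box (Neg A)).
Definition Iff (A B : formula) : formula := And (Imp A B) (Imp B A).

(* Propositional (Boolean) evaluation, treating variables, boxed formulas
   and rhd-formulas as propositional atoms. *)
Fixpoint tval (v : formula -> bool) (A : formula) : bool :=
  match A with
  | Var _ => v A
  | Top => true
  | Bot => false
  | Imp B C => orb (negb (tval v B)) (tval v C)
  | Or B C => orb (tval v B) (tval v C)
  | And B C => andb (tval v B) (tval v C)
  | Box _ => v A
  | Rhd _ _ => v A
  end.

Definition tautology (A : formula) : Prop := forall v, tval v A = true.

Inductive prov_ILmJ2p : formula -> Prop :=
| ilj_taut A : tautology A -> prov_ILmJ2p A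
| ilj_K A B : prov_ILmJ2p (Imp (Box (Imp A B)) (Imp (Box A) (Box B)))
| ilj_L A : prov_ILmJ2p (Imp (Box (Imp (Box A) A)) (Box A))
| ilj_J3 A B C : prov_ILmJ2p (Imp (And (Rhd A C) (Rhd B C)) (Rhd (Or A B) C))
| ilj_J6 A : prov_ILmJ2p (Iff (Box (Neg A)) (Rhd A Bot))
| ilj_J2p A B C : prov_ILmJ2p (Imp (And (Rhd A (Or B C)) (Rhd B C)) (Rhd A C))
| ilj_MP A B : prov_ILmJ2p (Imp A B) -> prov_ILmJ2p A -> prov_ILmJ2p B
| ilj_Nec A : prov_ILmJ2p A -> prov_ILmJ2p (Box A)
| ilj_R1 A B C : prov_ILmJ2p (Imp A B) -> prov_ILmJ2p (Imp (Rhd C A) (Rhd C B))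
| ilj_R2 A B C : prov_ILmJ2p (Imp A B) -> prov_ILmJ2p (Imp (Rhd B C) (Rhd A C)).

Inductive prov_CL : formula -> Prop :=
| cl_taut A : tautology A -> prov_CL A
| cl_K A B : prov_CL (Imp (Box (Imp A B)) (Imp (Box A) (Box B)))
| cl_L A : prov_CL (Imp (Box (Imp (Box A) A)) (Box A))
| cl_J1 A B : prov_CL (Imp (Box (Imp A B)) (Rhd A B))
| cl_J2 A B C : prov_CL (Imp (And (Rhd A B) (Rhd B C)) (Rhd A C))
| cl_J3 A B C : prov_CL (Imp (And (Rhd A C) (Rhd B C)) (Rhd (Or A B) C))
| cl_J4 A B : prov_CL (Imp (Rhd A B) (Imp (Dia A) (Dia B)))
| cl_MP A B : prov_CL (Imp A B) -> prov_CL A -> prov_CL B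
| cl_Nec A : prov_CL A -> prov_CL (Box A).

Inductive logic : Type := ILmJ2p | CL.

Definition prov (L : logic) (A : formula) : Prop :=
  match L with
  | ILmJ2p => prov_ILmJ2p A
  | CL => prov_CL A
  end.

Record frame : Type := Frame {
  W : Type;
  R : W -> W -> Prop;
  S : W -> W -> Prop
}.

Definition transitive {X : Type} (r : X -> X -> Prop) : Prop :=
  forall x y z, r x y -> r y z -> r x z.
Definition reflexive {X : Type} (r : X -> X -> Prop) : Prop := forall x, r x x.

Definition simplified_frame (F : frame) : Prop :=
  inhabited (W F) /\ transitive (R F) /\ well_founded (fun x y => R F y x).

Definition finite_frame (F : frame) : Prop :=
  exists l : list (W F), forall w, In w l.

Definition L_frame (L : logic) (F : frame) : Prop :=
  simplified_frame F /\
  match L with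
  | ILmJ2p => transitive (S F)
  | CL => reflexive (S F) /\ transitive (S F)
  end.

Fixpoint forces (F : frame) (V : nat -> W F -> Prop) (x : W F) (A : formula) : Prop :=
  match A with
  | Var p => V p x
  | Top => True
  | Bot => False
  | Imp B C => forces F V x B -> forces F V x C
  | Or B C => forces F V x B \/ forces F V x C
  | And B C => forces F V x B /\ forces F V x C
  | Box B => forall y, R F x y -> forces F V y B
  | Rhd B C => forall y, R F x y -> forces F V y B ->
                 exists z, R F x z /\ S F y z /\ forces F V z C
  end.

Definition valid_in (F : frame) (A : formula) : Prop :=
  forall (V : nat -> W F -> Prop) (x : W F), forces F V x A.

From Stdlib Require Import Bool List Arith Lia Wf_nat Classical ClassicalEpsilon ProofIrrelevance.
Import ListNotations.

(* Let [A] be unprovable, [Phi] its subformulas, and extend [Phi] by the formulas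
   [Box (Neg psi)] for [psi] a conjunction of [Phi]-literals.  Atoms are the consistent
   complete sets over this finite set of formulas.  A world is a path of atoms starting from an
   atom refuting [A], in which each atom is a successor of the previous one: the parent is
   consistent with [Dia] of the child, and the child contains a boxed formula that the parent
   lacks.  Such successors exist by Löb's principle [Dia psi -> Dia (psi /\ Box (Neg psi))], so
   paths have bounded length; the model is finite and its relation [R], proper extension of
   paths, is conversely well-founded.  Every node also carries a tag, a set of formulas to be
   avoided: a world [S]-sees its siblings with a larger tag that they avoid and the children of
   the strict ancestors of its parent (and, in CL, itself).  The consistency of the required
   [S]-successors in the truth lemma for [Rhd] is exactly what J2+ (in CL: J1 and J2) provides. *)

(** * Hilbert-style derivations *)

Section Hilbert.
Context {L : logic}.
Notation Pv := (prov L).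

Lemma prov_taut A : tautology A -> Pv A.
Proof. destruct L; simpl; constructor; auto. Qed.
Lemma prov_mp A B : Pv (Imp A B) -> Pv A -> Pv B.
Proof. destruct L; simpl; eauto using ilj_MP, cl_MP. Qed.
Lemma prov_nec A : Pv A -> Pv (Box A).
Proof. destruct L; simpl; eauto using ilj_Nec, cl_Nec. Qed.
Lemma prov_K A B : Pv (Imp (Box (Imp A B)) (Imp (Box A) (Box B))).
Proof. destruct L; simpl; [apply ilj_K | apply cl_K]. Qed.
Lemma prov_Lob A : Pv (Imp (Box (Imp (Box A) A)) (Box A)).
Proof. destruct L; simpl; [apply ilj_L | apply cl_L]. Qed.
Lemma prov_J3 A B C : Pv (Imp (And (Rhd A C) (Rhd B C)) (Rhd (Or A B) C)).
Proof. destruct L; simpl; [apply ilj_J3 | apply cl_J3]. Qed.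

End Hilbert.

Ltac taut_tac :=
  try apply prov_taut;
  let v := fresh "v" in
  intro v; simpl;
  repeat (match goal with
          | |- context [tval v ?X] => destruct (tval v X)
          | |- context [v ?X] => destruct (v X)
          end; simpl);
  reflexivity.

Section Hilbert_derived.
Context {L : logic}.
Notation Pv := (prov L).

Lemma prov_taut_mp X Y : tautology (Imp X Y) -> Pv X -> Pv Y.
Proof. intros T HX. exact (prov_mp _ _ (prov_taut _ T) HX). Qed.
Lemma prov_taut_mp2 X Y Z : tautology (Imp X (Imp Y Z)) -> Pv X -> Pv Y -> Pv Z.
Proof. intros T HX HY. exact (prov_mp _ _ (prov_taut_mp _ _ T HX) HY). Qed.
Lemma prov_taut_mp3 X Y Z U :
  tautology (Imp X (Imp Y (Imp Z U))) -> Pv X -> Pv Y -> Pv Z -> Pv U.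
Proof. intros T HX HY HZ. exact (prov_mp _ _ (prov_taut_mp2 _ _ _ T HX HY) HZ). Qed.

Lemma prov_imp_const G X : Pv X -> Pv (Imp G X).
Proof. apply prov_taut_mp. taut_tac. Qed.
Lemma prov_imp_taut_mp G X Y : tautology (Imp X Y) -> Pv (Imp G X) -> Pv (Imp G Y).
Proof.
  intro T. apply prov_taut_mp. intro v. specialize (T v). simpl in *.
  destruct (tval v G), (tval v X), (tval v Y); auto.
Qed.
Lemma prov_imp_taut_mp2 G X Y Z :
  tautology (Imp X (Imp Y Z)) -> Pv (Imp G X) -> Pv (Imp G Y) -> Pv (Imp G Z).
Proof.
  intro T. apply prov_taut_mp2. intro v. specialize (T v). simpl in *.
  destruct (tval v G), (tval v X), (tval v Y), (tval v Z); auto.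
Qed.
Lemma prov_imp_mp G X Y : Pv (Imp G (Imp X Y)) -> Pv (Imp G X) -> Pv (Imp G Y).
Proof. apply prov_imp_taut_mp2. taut_tac. Qed.

Lemma prov_box_mono X Y : Pv (Imp X Y) -> Pv (Imp (Box X) (Box Y)).
Proof. intro H. exact (prov_mp _ _ (prov_K X Y) (prov_nec _ H)). Qed.
Lemma prov_box_taut X Y : tautology (Imp X Y) -> Pv (Imp (Box X) (Box Y)).
Proof. intro T. exact (prov_box_mono _ _ (prov_taut _ T)). Qed.
Lemma prov_box_taut2 X Y Z :
  tautology (Imp X (Imp Y Z)) -> Pv (Imp (Box X) (Imp (Box Y) (Box Z))).
Proof.
  intro T. refine (prov_taut_mp2 _ _ _ _ (prov_box_taut _ _ T) (prov_K Y Z)). taut_tac.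
Qed.
Lemma prov_imp_box_taut_mp G X Y :
  tautology (Imp X Y) -> Pv (Imp G (Box X)) -> Pv (Imp G (Box Y)).
Proof. intro T. exact (prov_imp_mp _ _ _ (prov_imp_const _ _ (prov_box_taut _ _ T))). Qed.
Lemma prov_imp_box_taut_mp2 G X Y Z : tautology (Imp X (Imp Y Z)) ->
  Pv (Imp G (Box X)) -> Pv (Imp G (Box Y)) -> Pv (Imp G (Box Z)).
Proof.
  intros T HX. exact (prov_imp_mp _ _ _ (prov_imp_mp _ _ _
    (prov_imp_const _ _ (prov_box_taut2 _ _ _ T)) HX)).
Qed.

(* Löb's axiom at [C /\ Box C]. *)
Lemma prov_4 C : Pv (Imp (Box C) (Box (Box C))).
Proof.
  set (B := And C (Box C)).
  assert (HBC : Pv (Imp (Box B) (Box C))) by (apply prov_box_taut; unfold B; taut_tac).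
  assert (HC : Pv (Imp (Box C) (Box (Imp (Box B) B)))).
  { apply prov_box_mono. refine (prov_taut_mp _ _ _ HBC). unfold B; taut_tac. }
  assert (HBBC : Pv (Imp (Box B) (Box (Box C)))) by (apply prov_box_taut; unfold B; taut_tac).
  clearbody B.
  refine (prov_taut_mp3 _ _ _ _ _ HC (prov_Lob B) HBBC). taut_tac.
Qed.

Lemma prov_dia_Lob P : Pv (Imp (Dia P) (Dia (And P (Box (Neg P))))).
Proof.
  assert (H : Pv (Imp (Box (Neg (And P (Box (Neg P))))) (Box (Imp (Box (Neg P)) (Neg P)))))
    by (apply prov_box_taut; taut_tac).
  refine (prov_taut_mp2 _ _ _ _ H (prov_Lob (Neg P))). unfold Dia, Neg; taut_tac.
Qed.

End Hilbert_derived.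

Lemma prov_rhd_refl_CL L B : L = CL -> prov L (Rhd B B).
Proof. intros ->. apply (cl_MP _ _ (cl_J1 B B)), cl_Nec, cl_taut. taut_tac. Qed.

Section Interpretability.
Context {L : logic}.
Notation Pv := (prov L).

Lemma prov_R1 A B C : Pv (Imp A B) -> Pv (Imp (Rhd C A) (Rhd C B)).
Proof.
  destruct L; simpl; intro H; [apply ilj_R1, H |].
  refine (prov_taut_mp2 (L := CL) _ _ _ _ (cl_MP _ _ (cl_J1 A B) (cl_Nec _ H)) (cl_J2 C A B)).
  taut_tac.
Qed.

Lemma prov_R2 A B C : Pv (Imp A B) -> Pv (Imp (Rhd B C) (Rhd A C)).
Proof.
  destruct L; simpl; intro H; [apply ilj_R2, H |].
  refine (prov_taut_mp2 (L := CL) _ _ _ _ (cl_MP _ _ (cl_J1 A B) (cl_Nec _ H)) (cl_J2 A B C)).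
  taut_tac.
Qed.

Lemma prov_J2p A B C : Pv (Imp (And (Rhd A (Or B C)) (Rhd B C)) (Rhd A C)).
Proof.
  destruct L; simpl; [apply ilj_J2p |].
  refine (prov_taut_mp3 (L := CL) _ _ _ _ _
    (prov_rhd_refl_CL CL C eq_refl) (cl_J3 B C C) (cl_J2 A (Or B C) C)).
  taut_tac.
Qed.

Lemma prov_box_neg_rhd_bot A : Pv (Imp (Box (Neg A)) (Rhd A Bot)).
Proof.
  destruct L; simpl; [| apply cl_J1].
  refine (prov_taut_mp (L := ILmJ2p) _ _ _ (ilj_J6 A)). unfold Iff; taut_tac.
Qed.

Lemma prov_rhd_bot_box_neg A : Pv (Imp (Rhd A Bot) (Box (Neg A))).
Proof.
  destruct L; simpl.
  - refine (prov_taut_mp (L := ILmJ2p) _ _ _ (ilj_J6 A)). unfold Iff; taut_tac.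
  - assert (H : prov CL (Box (Neg Bot))) by (apply cl_Nec, cl_taut; taut_tac).
    refine (prov_taut_mp2 (L := CL) _ _ _ _ H (cl_J4 A Bot)). unfold Dia, Neg; taut_tac.
Qed.

Lemma prov_bot_rhd X : Pv (Rhd Bot X).
Proof.
  assert (H : Pv (Rhd Bot Bot)).
  { apply (prov_mp _ _ (prov_box_neg_rhd_bot Bot)), prov_nec. taut_tac. }
  refine (prov_mp _ _ (prov_R1 Bot X Bot _) H). taut_tac.
Qed.

Lemma prov_imp_J3 G A B C :
  Pv (Imp G (Rhd A C)) -> Pv (Imp G (Rhd B C)) -> Pv (Imp G (Rhd (Or A B) C)).
Proof.
  intros HA HB. apply (prov_imp_mp _ _ _ (prov_imp_const _ _ (prov_J3 A B C))).
  refine (prov_imp_taut_mp2 _ _ _ _ _ HA HB). taut_tac.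
Qed.
Lemma prov_imp_J2p G A B C :
  Pv (Imp G (Rhd A (Or B C))) -> Pv (Imp G (Rhd B C)) -> Pv (Imp G (Rhd A C)).
Proof.
  intros HA HB. apply (prov_imp_mp _ _ _ (prov_imp_const _ _ (prov_J2p A B C))).
  refine (prov_imp_taut_mp2 _ _ _ _ _ HA HB). taut_tac.
Qed.
Lemma prov_imp_R1 G A B C : Pv (Imp A B) -> Pv (Imp G (Rhd C A)) -> Pv (Imp G (Rhd C B)).
Proof. intro H. exact (prov_imp_mp _ _ _ (prov_imp_const _ _ (prov_R1 _ _ C H))). Qed.
Lemma prov_imp_R2 G A B C : Pv (Imp A B) -> Pv (Imp G (Rhd B C)) -> Pv (Imp G (Rhd A C)).
Proof. intro H. exact (prov_imp_mp _ _ _ (prov_imp_const _ _ (prov_R2 _ _ C H))). Qed.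
Lemma prov_imp_box_neg_rhd_bot G A : Pv (Imp G (Box (Neg A))) -> Pv (Imp G (Rhd A Bot)).
Proof. exact (prov_imp_mp _ _ _ (prov_imp_const _ _ (prov_box_neg_rhd_bot A))). Qed.
Lemma prov_imp_rhd_bot_box_neg G A : Pv (Imp G (Rhd A Bot)) -> Pv (Imp G (Box (Neg A))).
Proof. exact (prov_imp_mp _ _ _ (prov_imp_const _ _ (prov_rhd_bot_box_neg A))). Qed.

Lemma prov_imp_rhd_box_r G A B C :
  Pv (Imp G (Rhd A B)) -> Pv (Imp G (Box (Imp B C))) -> Pv (Imp G (Rhd A C)).
Proof.
  intros HAB HBC.
  assert (Hbot : Pv (Imp G (Rhd (And B (Neg C)) Bot))).
  { apply prov_imp_box_neg_rhd_bot. refine (prov_imp_box_taut_mp _ _ _ _ HBC). taut_tac. }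
  assert (HBnC : Pv (Imp G (Rhd (And B (Neg C)) C)))
    by (refine (prov_imp_R1 _ _ _ _ _ Hbot); taut_tac).
  refine (prov_imp_J2p _ _ (And B (Neg C)) _ _ HBnC).
  refine (prov_imp_R1 _ _ _ _ _ HAB). taut_tac.
Qed.

Lemma prov_imp_rhd_box_l G A B C :
  Pv (Imp G (Box (Imp A C))) -> Pv (Imp G (Rhd C B)) -> Pv (Imp G (Rhd A B)).
Proof.
  intros HAC HCB.
  assert (Hbot : Pv (Imp G (Rhd (And A (Neg C)) Bot))).
  { apply prov_imp_box_neg_rhd_bot. refine (prov_imp_box_taut_mp _ _ _ _ HAC). taut_tac. }
  assert (HAnC : Pv (Imp G (Rhd (And A (Neg C)) B)))
    by (refine (prov_imp_R1 _ _ _ _ _ Hbot); taut_tac).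
  assert (HAC' : Pv (Imp G (Rhd (And A C) B))) by (refine (prov_imp_R2 _ _ _ _ _ HCB); taut_tac).
  refine (prov_imp_R2 _ _ _ _ _ (prov_imp_J3 _ _ _ _ HAC' HAnC)). taut_tac.
Qed.

End Interpretability.

(** * Soundness *)

Section Soundness.
Variables (F : frame) (V : nat -> W F -> Prop).
Notation forces := (forces F V).

Lemma tval_forces x B :
  tval (fun B => if excluded_middle_informative (forces x B) then true else false) B = true
  <-> forces x B.
Proof.
  induction B; simpl; try (intuition congruence; fail);
    try (destruct (excluded_middle_informative _); simpl; intuition congruence).
  - rewrite orb_true_iff, negb_true_iff, <- IHB2.
    destruct (tval _ B1); [apply proj1 in IHB1 | apply proj2 in IHB1]; intuition congruence.
  - rewrite orb_true_iff, IHB1, IHB2. tauto.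
  - rewrite andb_true_iff, IHB1, IHB2. tauto.
Qed.

Lemma forces_tautology x A : tautology A -> forces x A.
Proof. intro T. apply tval_forces, T. Qed.

Lemma forces_K x A B : forces x (Imp (Box (Imp A B)) (Imp (Box A) (Box B))).
Proof. simpl. eauto. Qed.

Lemma forces_J3 x A B C : forces x (Imp (And (Rhd A C) (Rhd B C)) (Rhd (Or A B) C)).
Proof. intros [HA HB] y Hy [Ay | By]; eauto. Qed.

Lemma forces_J6 x A : forces x (Iff (Box (Neg A)) (Rhd A Bot)).
Proof.
  split.
  - intros H y Hy Ay. destruct (H y Hy Ay).
  - intros H y Hy Ay. destruct (H y Hy Ay) as (z & _ & _ & []).
Qed.

Lemma forces_J4 x A B : forces x (Imp (Rhd A B) (Imp (Dia A) (Dia B))).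
Proof.
  intros H HA HnB. apply HA. intros y Hy Ay.
  destruct (H y Hy Ay) as (z & Hz & _ & Bz). exact (HnB z Hz Bz).
Qed.

Hypothesis R_trans : transitive (R F).
Hypothesis R_wf : well_founded (fun x y => R F y x).

Lemma forces_Lob x A : forces x (Imp (Box (Imp (Box A) A)) (Box A)).
Proof.
  intros H y. induction y as [y IH] using (well_founded_induction R_wf).
  intro Hxy. apply H; auto. intros z Hyz. apply IH; eauto.
Qed.

Hypothesis S_trans : transitive (S F).

Lemma forces_J2 x A B C : forces x (Imp (And (Rhd A B) (Rhd B C)) (Rhd A C)).
Proof.
  intros [HAB HBC] y Hy Ay. destruct (HAB y Hy Ay) as (z & Hz & Hyz & Bz).
  destruct (HBC z Hz Bz) as (u & Hu & Hzu & Cu). exists u. eauto.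
Qed.

Lemma forces_J2p x A B C : forces x (Imp (And (Rhd A (Or B C)) (Rhd B C)) (Rhd A C)).
Proof.
  intros [HA HBC] y Hy Ay. destruct (HA y Hy Ay) as (z & Hz & Hyz & [Bz | Cz]).
  - destruct (HBC z Hz Bz) as (u & Hu & Hzu & Cu). exists u. eauto.
  - exists z. auto.
Qed.

Hypothesis S_refl : reflexive (S F).

Lemma forces_J1 x A B : forces x (Imp (Box (Imp A B)) (Rhd A B)).
Proof. intros H y Hy Ay. exists y. exact (conj Hy (conj (S_refl y) (H y Hy Ay))). Qed.

End Soundness.

Theorem soundness L A : prov L A -> forall F, L_frame L F -> valid_in F A.
Proof.
  intros HA F [[_ [R_trans R_wf]] HS] V.
  destruct L; simpl in HA, HS; [| destruct HS as [S_refl HS]]; induction HA; intro x;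
    eauto using forces_tautology, forces_K, forces_Lob, forces_J3, forces_J6,
      forces_J2p, forces_J1, forces_J2, forces_J4.
  all: try (intros y _; apply IHHA).
  all: try exact (IHHA1 x (IHHA2 x)).
  - intros H y Hy Cy. destruct (H y Hy Cy) as (z & Hz & Hyz & Az).
    exists z. exact (conj Hz (conj Hyz (IHHA z Az))).
  - intros H y Hy Ay. exact (H y Hy (IHHA y Ay)).
Qed.

(** * Formulas, literals and finite lists *)

Definition formula_eq_dec : forall x y : formula, {x = y} + {x <> y}.
Proof. decide equality; apply Nat.eq_dec. Defined.

Definition is_box (E : formula) : bool := match E with Box _ => true | _ => false end.

Definition lit := (formula * bool)%type.
Definition lit_eq_dec : forall x y : lit, {x = y} + {x <> y}.
Proof. decide equality; [apply bool_dec | apply formula_eq_dec]. Defined.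

Definition lit_formula (x : lit) : formula := if snd x then fst x else Neg (fst x).
Definition neg_lit (D : formula) : lit := (D, false).
Definition sat_lit (T : list formula) (x : lit) : Prop :=
  if snd x then In (fst x) T else ~ In (fst x) T.

Fixpoint big_and (l : list formula) : formula :=
  match l with [] => Top | x :: l' => And x (big_and l') end.
Fixpoint big_or (l : list formula) : formula :=
  match l with [] => Bot | x :: l' => Or x (big_or l') end.
Definition lits_and (l : list lit) : formula := big_and (map lit_formula l).

Fixpoint sublists {A} (l : list A) : list (list A) :=
  match l with
  | [] => [[]]
  | x :: l' => map (cons x) (sublists l') ++ sublists l'
  end.

Lemma sublists_nil {A} (l : list A) : In [] (sublists l).
Proof. induction l; simpl; auto using in_or_app. Qed.

Lemma sublists_cons {A} (l s : list A) x : In s (sublists l) -> In (x :: s) (sublists (x :: l)).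
Proof. intro H. apply in_or_app. left. apply in_map, H. Qed.

Lemma sublists_skip {A} (l s : list A) x : In s (sublists l) -> In s (sublists (x :: l)).
Proof. intro H. apply in_or_app. right. exact H. Qed.

Lemma sublists_incl {A} (l s : list A) : In s (sublists l) -> incl s l.
Proof.
  revert s; induction l as [|a l IH]; simpl; intros s H.
  - destruct H as [<- | []]. apply incl_nil_l.
  - apply in_app_or in H as [H | H].
    + apply in_map_iff in H as (s' & <- & H). apply incl_cons; [left; auto |].
      apply incl_tl, IH, H.
    + apply incl_tl, IH, H.
Qed.

Lemma filter_sublists {A} (f : A -> bool) l : In (filter f l) (sublists l).
Proof.
  induction l as [|a l IH]; simpl; auto.
  destruct (f a); [apply sublists_cons | apply sublists_skip]; exact IH.
Qed.

Lemma sublists_single {A} (l : list A) x : In x l -> In [x] (sublists l).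
Proof.
  induction l as [|a l IH]; simpl; [intros [] |]. intros [-> | H].
  - apply sublists_cons, sublists_nil.
  - apply sublists_skip, IH, H.
Qed.

Arguments lits_and : simpl never.
Arguments big_or : simpl never.
Arguments lit_formula : simpl never.

Lemma tval_big_and v l : tval v (big_and l) = forallb (tval v) l.
Proof. induction l; simpl; f_equal; auto. Qed.

Lemma tval_big_or v l : tval v (big_or l) = existsb (tval v) l.
Proof. induction l; simpl; f_equal; auto. Qed.

Lemma tval_lits_and v l : tval v (lits_and l) = forallb (fun x => tval v (lit_formula x)) l.
Proof. unfold lits_and. rewrite tval_big_and. induction l; simpl; f_equal; auto. Qed.

Lemma tval_lits_and_app v l1 l2 :
  tval v (lits_and (l1 ++ l2)) = tval v (lits_and l1) && tval v (lits_and l2).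
Proof. rewrite !tval_lits_and, forallb_app. reflexivity. Qed.

Lemma tval_lits_and_neg_lit v l : tval v (lits_and (map neg_lit l)) = negb (tval v (big_or l)).
Proof.
  rewrite tval_lits_and, tval_big_or.
  induction l; simpl; [reflexivity |]. rewrite IHl, negb_orb, orb_false_r. reflexivity.
Qed.

Lemma tval_lits_and_neg v b X Y :
  tval v (lits_and (b :: map neg_lit X ++ map neg_lit Y)) =
  tval v (lit_formula b) && negb (tval v (big_or X)) && negb (tval v (big_or Y)).
Proof.
  change (b :: ?l) with ([b] ++ l).
  rewrite !tval_lits_and_app, !tval_lits_and_neg_lit, tval_lits_and. simpl.
  rewrite andb_true_r, andb_assoc. reflexivity.
Qed.

Lemma prov_imp_rhd_big_or_l L G Y C :
  (forall D, In D Y -> prov L (Imp G (Rhd D C))) -> prov L (Imp G (Rhd (big_or Y) C)).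
Proof.
  induction Y as [|D Y IH]; intro H.
  - apply prov_imp_const, prov_bot_rhd.
  - apply prov_imp_J3; [apply H; left; reflexivity | apply IH; intros; apply H; right; assumption].
Qed.

Lemma tautology_contra X Y : tautology (Imp X Y) -> tautology (Imp (Neg Y) (Neg X)).
Proof. intros T v. specialize (T v). simpl in *. destruct (tval v X), (tval v Y); auto. Qed.

Lemma big_and_elim l x : In x l -> tautology (Imp (big_and l) x).
Proof.
  intros H v. simpl. rewrite tval_big_and.
  destruct (forallb (tval v) l) eqn:E; simpl; auto.
  rewrite forallb_forall in E. rewrite E; auto.
Qed.

Lemma lits_and_elim l x : In x l -> tautology (Imp (lits_and l) (lit_formula x)).
Proof. intro H. apply big_and_elim, in_map, H. Qed.

Lemma lits_and_incl l1 l2 : incl l2 l1 -> tautology (Imp (lits_and l1) (lits_and l2)).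
Proof.
  intros H v. simpl. rewrite !tval_lits_and.
  destruct (forallb _ l1) eqn:E; simpl; auto.
  rewrite forallb_forall in E. apply forallb_forall. auto.
Qed.

Lemma classical_filter {A} (P : A -> Prop) (l : list A) :
  exists Y, forall D, In D Y <-> In D l /\ P D.
Proof.
  induction l as [|a l [Y HY]]; [exists []; simpl; tauto |].
  destruct (classic (P a)) as [Ha | Ha]; [exists (a :: Y) | exists Y];
    intro D; simpl; rewrite ?HY; intuition congruence.
Qed.

Lemma filter_length_lt {A} (f g : A -> bool) l :
  (forall x, In x l -> f x = true -> g x = true) ->
  (exists x, In x l /\ g x = true /\ f x = false) ->
  length (filter f l) < length (filter g l).
Proof.
  assert (Hle : forall l', (forall x, In x l' -> f x = true -> g x = true) ->
            length (filter f l') <= length (filter g l')).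
  { induction l' as [|a l' IH]; simpl; intro H; auto.
    destruct (f a) eqn:Ef; [rewrite (H a (or_introl eq_refl) Ef) |]; simpl;
      [| destruct (g a); simpl]; specialize (IH ltac:(auto)); lia. }
  induction l as [|a l IH]; simpl; intros H (x & Hx & Hg & Hf); [destruct Hx |].
  destruct Hx as [-> | Hx].
  - rewrite Hf, Hg. simpl. specialize (Hle l ltac:(auto)). lia.
  - destruct (f a) eqn:Ef; [rewrite (H a (or_introl eq_refl) Ef) |]; simpl;
      [| destruct (g a); simpl]; specialize (IH ltac:(auto) ltac:(eauto)); lia.
Qed.

Lemma bounded_lists_finite {A} (univ : list A) n :
  exists ls, forall p, incl p univ -> length p <= n -> In p ls.
Proof.
  induction n as [|n [ls Hls]].
  - exists [[]]. intros [|x p] _ Hp; simpl in *; [auto | lia].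
  - exists ([] :: map (fun xp => fst xp :: snd xp) (list_prod univ ls)).
    intros [|x p] Hsub Hp; [left; auto | right].
    apply in_map_iff. exists (x, p). split; [reflexivity |].
    apply in_prod; [apply Hsub; left; auto |].
    apply Hls; [intros y Hy; apply Hsub; right; auto | simpl in Hp; lia].
Qed.

Lemma sig_finite {A} (P : A -> Prop) (ls : list A) :
  (forall w : {x | P x}, In (proj1_sig w) ls) -> exists l : list {x | P x}, forall w, In w l.
Proof.
  intro Hls.
  assert (H : forall ls', exists l : list {x | P x}, forall w, In (proj1_sig w) ls' -> In w l).
  { induction ls' as [|c ls' [l Hl]]; [exists []; intros w [] |].
    destruct (classic (P c)) as [Hc | Hc]; [exists (exist _ c Hc :: l) | exists l];
      intros [x Hx] [Hxc | Hxs]; simpl in *.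
    - subst. left. f_equal. apply proof_irrelevance.
    - right. apply (Hl (exist _ x Hx)), Hxs.
    - subst. contradiction.
    - apply (Hl (exist _ x Hx)), Hxs. }
  destruct (H ls) as [l Hl]. exists l. auto.
Qed.

Definition strict_ext {A} (p q : list A) : Prop := exists e, e <> [] /\ q = e ++ p.

Lemma strict_ext_trans {A} (p q r : list A) : strict_ext p q -> strict_ext q r -> strict_ext p r.
Proof.
  intros (e1 & He1 & ->) (e2 & He2 & ->). exists (e2 ++ e1). split.
  - destruct e2; [contradiction | discriminate].
  - apply app_assoc.
Qed.

Lemma strict_ext_length {A} (p q : list A) : strict_ext p q -> length p < length q.
Proof. intros ([|x e] & He & ->); [contradiction |]. simpl. rewrite length_app. lia. Qed.

(** * Atoms and successors *)

Definition signed (Sl : list formula) (E : formula) : formula :=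
  if in_dec formula_eq_dec E Sl then E else Neg E.

Section Consistency.
Variable L : logic.
Notation Pv := (prov L).

Definition consistent (X : formula) : Prop := ~ Pv (Neg X).

Lemma consistent_mono X Y : Pv (Imp X Y) -> consistent X -> consistent Y.
Proof. intros HXY HX HY. apply HX. refine (prov_taut_mp2 _ _ _ _ HXY HY). taut_tac. Qed.

Lemma not_consistent_contra X A : Pv (Imp X A) -> Pv (Imp X (Neg A)) -> ~ consistent X.
Proof. intros HA HnA HX. apply HX. refine (prov_taut_mp2 _ _ _ _ HA HnA). taut_tac. Qed.

Lemma consistent_and_neg G X : ~ Pv (Imp G X) -> consistent (And G (Neg X)).
Proof. intros HGX H. apply HGX. refine (prov_taut_mp _ _ _ H). taut_tac. Qed.

Lemma consistent_split X E :
  consistent X -> consistent (And X E) \/ consistent (And X (Neg E)).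
Proof.
  intro HX. apply NNPP. intros [HE HnE]%not_or_and. apply NNPP in HE, HnE.
  apply HX. refine (prov_taut_mp2 _ _ _ _ HE HnE). taut_tac.
Qed.

Definition and_dia (G X : formula) : formula := And G (Dia X).

Lemma and_dia_mono G X Y : Pv (Imp X Y) -> Pv (Imp (and_dia G X) (and_dia G Y)).
Proof.
  intro HXY.
  assert (H : Pv (Imp (Box (Neg Y)) (Box (Neg X)))).
  { apply prov_box_mono. refine (prov_taut_mp _ _ _ HXY). taut_tac. }
  refine (prov_taut_mp _ _ _ H). unfold and_dia, Dia. taut_tac.
Qed.

Lemma consistent_and_dia_split G X E : consistent (and_dia G X) ->
  consistent (and_dia G (And X E)) \/ consistent (and_dia G (And X (Neg E))).
Proof.
  intro HX. apply NNPP. intros [HE HnE]%not_or_and. apply NNPP in HE, HnE.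
  apply HX.
  assert (H : Pv (Imp (Box (Neg (And X E))) (Imp (Box (Neg (And X (Neg E)))) (Box (Neg X)))))
    by (apply prov_box_taut2; taut_tac).
  refine (prov_taut_mp3 _ _ _ _ _ HE HnE H). unfold and_dia, Dia. taut_tac.
Qed.

Lemma consistent_and_dia_r G X : consistent (and_dia G X) -> consistent X.
Proof.
  intros HGX HX. apply HGX. refine (prov_taut_mp _ _ _ (prov_nec _ HX)).
  unfold and_dia, Dia. taut_tac.
Qed.

Lemma consistent_and_dia_or_box G X : consistent (and_dia G X) \/ Pv (Imp G (Box (Neg X))).
Proof.
  destruct (classic (consistent (and_dia G X))) as [H | H]; [left; exact H | right].
  apply NNPP in H. refine (prov_taut_mp _ _ _ H). unfold and_dia, Dia. taut_tac.
Qed.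

Lemma lindenbaum (M : formula -> formula)
  (M_mono : forall X Y, Pv (Imp X Y) -> Pv (Imp (M X) (M Y)))
  (M_split : forall X E, consistent (M X) ->
     consistent (M (And X E)) \/ consistent (M (And X (Neg E)))) :
  forall l X, NoDup l -> consistent (M X) ->
  exists Sl, In Sl (sublists l) /\ consistent (M (And X (big_and (map (signed Sl) l)))).
Proof.
  induction l as [|E l IH]; intros X Hnd HX.
  - exists []. split; [left; reflexivity |].
    refine (consistent_mono _ _ (M_mono _ _ _) HX). taut_tac.
  - apply NoDup_cons_iff in Hnd as [HEl Hnd].
    destruct (M_split X E HX) as [HXE | HXE]; destruct (IH _ Hnd HXE) as (Sl & HSl & HC).
    + exists (E :: Sl). split; [apply sublists_cons, HSl |]. simpl.
      replace (map (signed (E :: Sl)) l) with (map (signed Sl) l).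
      2:{ apply map_ext_in. intros x Hx. unfold signed.
          destruct (in_dec formula_eq_dec x Sl), (in_dec formula_eq_dec x (E :: Sl));
            simpl in *; intuition congruence. }
      unfold signed at 1. destruct (in_dec formula_eq_dec E (E :: Sl)) as [_ | []]; [| left; auto].
      refine (consistent_mono _ _ (M_mono _ _ _) HC). taut_tac.
    + exists Sl. split; [apply sublists_skip, HSl |].
      simpl. unfold signed at 1. destruct (in_dec formula_eq_dec E Sl) as [HE |].
      { contradiction (HEl (sublists_incl _ _ HSl _ HE)). }
      refine (consistent_mono _ _ (M_mono _ _ _) HC). taut_tac.
Qed.

End Consistency.

Definition logic_eq_dec : forall L1 L2 : logic, {L1 = L2} + {L1 <> L2}.
Proof. decide equality. Defined.

Section Canonical_model.
Variable L : logic.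
Notation Pv := (prov L).
Notation consistent := (consistent L).

Variable Phi : list formula.
Hypothesis Phi_Imp : forall A B, In (Imp A B) Phi -> In A Phi /\ In B Phi.
Hypothesis Phi_Or : forall A B, In (Or A B) Phi -> In A Phi /\ In B Phi.
Hypothesis Phi_And : forall A B, In (And A B) Phi -> In A Phi /\ In B Phi.
Hypothesis Phi_Rhd : forall A B, In (Rhd A B) Phi -> In A Phi /\ In B Phi.
Hypothesis Phi_Box : forall A, In (Box A) Phi -> In A Phi.

Definition lits : list lit := list_prod Phi [true; false].

Definition Phi_ext : list formula :=
  nodup formula_eq_dec (Phi ++ map (fun l => Box (Neg (lits_and l))) (sublists lits)).

Definition charf (Sl : list formula) : formula := big_and (map (signed Sl) Phi_ext).
Definition atom (Sl : list formula) : Prop := In Sl (sublists Phi_ext) /\ consistent (charf Sl).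
Definition proves (Sl : list formula) (E : formula) : Prop := Pv (Imp (charf Sl) E).
Definition decides (Sl : list formula) (E : formula) : Prop := proves Sl E \/ proves Sl (Neg E).

Lemma Phi_ext_Phi E : In E Phi -> In E Phi_ext.
Proof. intro H. apply nodup_In, in_or_app. left. exact H. Qed.

Lemma Phi_ext_box_neg l : In l (sublists lits) -> In (Box (Neg (lits_and l))) Phi_ext.
Proof.
  intro H. apply nodup_In, in_or_app. right.
  apply (in_map (fun l => Box (Neg (lits_and l)))), H.
Qed.

Lemma lits_Phi E b : In E Phi -> In (E, b) lits.
Proof. intro H. apply in_prod; [exact H | destruct b; simpl; auto]. Qed.

Lemma neg_lits_lits Y : incl Y Phi -> incl (map neg_lit Y) lits.
Proof. intros HY x (D & <- & HD)%in_map_iff. apply lits_Phi, HY, HD. Qed.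

Lemma atom_incl Sl : atom Sl -> incl Sl Phi_ext.
Proof. intros [H _]. apply sublists_incl, H. Qed.

Lemma proves_signed Sl E : In E Phi_ext -> proves Sl (signed Sl E).
Proof. intro H. apply prov_taut, big_and_elim, in_map, H. Qed.

Lemma proves_in Sl E : In E Phi_ext -> In E Sl -> proves Sl E.
Proof.
  intros H HE. generalize (proves_signed Sl E H). unfold signed.
  destruct (in_dec formula_eq_dec E Sl); tauto.
Qed.

Lemma proves_notin Sl E : In E Phi_ext -> ~ In E Sl -> proves Sl (Neg E).
Proof.
  intros H HE. generalize (proves_signed Sl E H). unfold signed.
  destruct (in_dec formula_eq_dec E Sl); tauto.
Qed.

Lemma in_iff_proves Sl E : consistent (charf Sl) -> In E Phi_ext -> (In E Sl <-> proves Sl E).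
Proof.
  intros HC HE. split; [apply proves_in, HE |]. intro H.
  destruct (in_dec formula_eq_dec E Sl) as [| HnE]; [assumption |].
  contradiction (not_consistent_contra _ _ _ H (proves_notin _ _ HE HnE)).
Qed.

Lemma decides_Phi_ext Sl E : In E Phi_ext -> decides Sl E.
Proof.
  intro H. destruct (in_dec formula_eq_dec E Sl);
    [left; apply proves_in | right; apply proves_notin]; assumption.
Qed.

Lemma decides_neg Sl E : decides Sl E -> decides Sl (Neg E).
Proof.
  intros [H | H]; [right | left]; [| exact H]. refine (prov_imp_taut_mp _ _ _ _ H). taut_tac.
Qed.

Lemma decides_and Sl E F : decides Sl E -> decides Sl F -> decides Sl (And E F).
Proof.
  intros [HE | HE] [HF | HF];
    [left; refine (prov_imp_taut_mp2 _ _ _ _ _ HE HF)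
    | right; refine (prov_imp_taut_mp _ _ _ _ HF)
    | right; refine (prov_imp_taut_mp _ _ _ _ HE) ..]; taut_tac.
Qed.

Lemma decides_lits_and Sl l : incl l lits -> decides Sl (lits_and l).
Proof.
  induction l as [|[E b] l IH]; intro Hl.
  - left. apply prov_imp_const. unfold lits_and. taut_tac.
  - apply incl_cons_inv in Hl as [HEb Hl]. apply in_prod_iff in HEb as [HE _].
    apply decides_and; [| apply IH, Hl]. unfold lit_formula. simpl.
    destruct b; [| apply decides_neg]; apply decides_Phi_ext, Phi_ext_Phi, HE.
Qed.

Lemma lindenbaum_atom X : consistent X ->
  exists Sl, In Sl (sublists Phi_ext) /\ consistent (And X (charf Sl)).
Proof.
  apply (lindenbaum L (fun X => X) (fun X Y H => H) (consistent_split L)), NoDup_nodup.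
Qed.

Lemma lindenbaum_dia G X : consistent (and_dia G X) ->
  exists Sl, In Sl (sublists Phi_ext) /\ consistent (and_dia G (And X (charf Sl))).
Proof.
  apply (lindenbaum L (and_dia G) (and_dia_mono L G) (consistent_and_dia_split L G)), NoDup_nodup.
Qed.

Lemma proves_succ G T E :
  consistent (and_dia (charf G) (charf T)) -> proves G (Box E) -> decides T E -> proves T E.
Proof.
  intros HGT HG [HT | HT]; [exact HT |]. exfalso. apply HGT.
  assert (H : Pv (Imp (Box (Imp (charf T) (Neg E))) (Imp (Box E) (Box (Neg (charf T))))))
    by (apply prov_box_taut2; taut_tac).
  refine (prov_taut_mp3 _ _ _ _ _ HG (prov_nec _ HT) H). unfold and_dia, Dia. taut_tac.
Qed.

Lemma proves_box_succ G T E :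
  consistent (and_dia (charf G) (charf T)) -> proves G (Box E) -> decides T (Box E) ->
  proves T (Box E).
Proof.
  intros HGT HG. apply (proves_succ G); [exact HGT |].
  exact (prov_imp_mp _ _ _ (prov_imp_const _ _ (prov_4 E)) HG).
Qed.

Definition canon (l : list lit) : list lit :=
  filter (fun x => if in_dec lit_eq_dec x l then true else false) lits.

Lemma canon_sublists l : In (canon l) (sublists lits).
Proof. apply filter_sublists. Qed.

Lemma canon_incl l : incl (canon l) l.
Proof. intros x [_ Hx]%filter_In. destruct (in_dec lit_eq_dec x l); congruence. Qed.

Lemma incl_canon l : incl l lits -> incl l (canon l).
Proof.
  intros Hl x Hx. apply filter_In. split; [apply Hl, Hx |].
  destruct (in_dec lit_eq_dec x l); tauto.
Qed.

(* The successor is taken inside [psi /\ Box (Neg psi)], where [psi] normalises [lits_and l]: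
   it then contains [Box (Neg psi)], which its parent cannot contain. *)
Lemma lob_successor G l : atom G -> incl l lits -> consistent (and_dia (charf G) (lits_and l)) ->
  exists T, atom T /\ consistent (and_dia (charf G) (charf T)) /\
    (exists C, In (Box C) T /\ ~ In (Box C) G) /\ (forall x, In x l -> sat_lit T x).
Proof.
  intros HG Hl HGl.
  set (psi := lits_and (canon l)).
  assert (Hpsi : In (Box (Neg psi)) Phi_ext) by apply Phi_ext_box_neg, canon_sublists.
  assert (HGpsi : consistent (and_dia (charf G) psi)).
  { refine (consistent_mono _ _ _ (and_dia_mono _ _ _ _ _) HGl).
    apply prov_taut, lits_and_incl, canon_incl. }
  assert (HGlob : consistent (and_dia (charf G) (And psi (Box (Neg psi))))).
  { refine (consistent_mono _ _ _ _ HGpsi). refine (prov_taut_mp _ _ _ (prov_dia_Lob psi)).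
    unfold and_dia. taut_tac. }
  destruct (lindenbaum_dia _ _ HGlob) as (T & HTsub & HGT).
  set (X := And (And psi (Box (Neg psi))) (charf T)) in HGT.
  assert (HX : consistent X) by exact (consistent_and_dia_r _ _ _ HGT).
  assert (HT : consistent (charf T)) by (refine (consistent_mono _ _ _ _ HX); unfold X; taut_tac).
  assert (HXT : forall E, proves T E -> Pv (Imp X E)).
  { intros E HE. refine (prov_taut_mp _ _ _ HE). unfold X. taut_tac. }
  assert (HXin : forall E, In E Phi_ext -> Pv (Imp X E) -> In E T).
  { intros E HE HXE. destruct (in_dec formula_eq_dec E T) as [| HnE]; [assumption |].
    contradiction (not_consistent_contra _ _ _ HXE (HXT _ (proves_notin _ _ HE HnE)) HX). }
  assert (HXnotin : forall E, Pv (Imp X (Neg E)) -> ~ In E T).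
  { intros E HXE HE. assert (HEext : In E Phi_ext) by exact (sublists_incl _ _ HTsub _ HE).
    exact (not_consistent_contra _ _ _ (HXT _ (proves_in _ _ HEext HE)) HXE HX). }
  exists T. split; [split; assumption |]. split; [| split].
  - refine (consistent_mono _ _ _ (and_dia_mono _ _ _ _ _) HGT). taut_tac.
  - exists (Neg psi). split; [apply HXin; [exact Hpsi | unfold X; taut_tac] |].
    intro HGbox. apply HGpsi. refine (prov_taut_mp _ _ _ (proves_in _ _ Hpsi HGbox)).
    unfold and_dia, Dia. taut_tac.
  - intros [E b] Hx.
    assert (HXlit : Pv (Imp X (lit_formula (E, b)))).
    { refine (prov_imp_taut_mp _ _ _ (lits_and_elim _ _ (incl_canon _ Hl _ Hx)) _).
      fold psi. unfold X. taut_tac. }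
    unfold sat_lit, lit_formula in *. simpl in *. destruct b.
    + apply HXin; [apply Phi_ext_Phi, (proj1 (in_prod_iff _ _ _ _) (Hl _ Hx)) | exact HXlit].
    + apply HXnotin, HXlit.
Qed.

Record step (G T X : list formula) : Prop := {
  step_atom : atom T;
  step_dia : consistent (and_dia (charf G) (charf T));
  step_new_box : exists C, In (Box C) T /\ ~ In (Box C) G;
  step_rhd : forall D, In D Phi -> In D T -> consistent (And (charf G) (Neg (Rhd D (big_or X))));
  step_avoid_CL : L = CL -> forall D, In D X -> ~ In D T }.

Lemma step_witness G X Xa b : atom G -> In (fst b) Phi -> incl Xa Phi ->
  (L = CL -> incl X Xa) ->
  (forall Y, Pv (Imp (charf G) (Rhd (big_or Y) (big_or X))) ->
     ~ Pv (Imp (charf G) (Box (Imp (lit_formula b) (Or (big_or Y) (big_or Xa)))))) ->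
  exists T, step G T X /\ sat_lit T b /\ (forall D, In D Xa -> ~ In D T).
Proof.
  intros HG Hb HXa HCL Hcons.
  (* Keeping every [D] with [charf G |- D |> big_or X] out of [T] gives [step_rhd]. *)
  destruct (classical_filter (fun D => Pv (Imp (charf G) (Rhd D (big_or X)))) Phi) as [Y HY].
  set (l := b :: map neg_lit Xa ++ map neg_lit Y).
  assert (Hl : incl l lits).
  { apply incl_cons; [destruct b; apply lits_Phi, Hb |].
    apply incl_app; apply neg_lits_lits; [exact HXa | intros D HD; apply HY, HD]. }
  assert (HGl : consistent (and_dia (charf G) (lits_and l))).
  { destruct (consistent_and_dia_or_box L (charf G) (lits_and l)) as [H | H]; [exact H |].
    exfalso. apply (Hcons Y).
    - apply prov_imp_rhd_big_or_l. intros D HD. apply HY, HD.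
    - refine (prov_imp_box_taut_mp _ _ _ _ H). intro v. unfold l, Neg. cbn [tval].
      rewrite tval_lits_and_neg.
      destruct (tval v (lit_formula b)), (tval v (big_or Xa)), (tval v (big_or Y)); reflexivity. }
  destruct (lob_successor G l HG Hl HGl) as (T & HT & HGT & Hbox & Hsat).
  assert (HavXa : forall D, In D Xa -> ~ In D T).
  { intros D HD. apply (Hsat (neg_lit D)). right. apply in_or_app. left. apply in_map, HD. }
  exists T. split; [split | split; [apply Hsat; left; reflexivity | exact HavXa]]; try assumption.
  - intros D HD HDT. apply consistent_and_neg. intro HGD.
    apply (Hsat (neg_lit D)); [| exact HDT].
    right. apply in_or_app. right. apply in_map, HY. split; assumption.
  - intros HL D HD. apply HavXa, HCL, HD. exact HL.
Qed.

Lemma box_witness G C : atom G -> In (Box C) Phi -> ~ In (Box C) G ->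
  exists T, step G T [] /\ ~ In C T.
Proof.
  intros HG HC HnC.
  destruct (step_witness G [] [] (C, false) HG (Phi_Box _ HC) (incl_nil_l _)
    (fun _ => incl_nil_l _)) as (T & HT & HCT & _).
  - intros Y HY HYC. apply HnC, (in_iff_proves _ _ (proj2 HG) (Phi_ext_Phi _ HC)).
    apply prov_imp_rhd_bot_box_neg in HY.
    refine (prov_imp_box_taut_mp2 _ _ _ _ _ HYC HY). unfold lit_formula. simpl. taut_tac.
  - exists T. split; assumption.
Qed.

Lemma rhd_witness G A B : atom G -> In (Rhd A B) Phi -> ~ In (Rhd A B) G ->
  exists T, step G T [B] /\ In A T /\ (L = CL -> ~ In B T).
Proof.
  intros HG HAB HnAB. destruct (Phi_Rhd _ _ HAB) as [HA HB].
  (* In CL, where [S] is reflexive, [T] itself must avoid [B]. *)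
  set (Xa := if logic_eq_dec L CL then [B] else []).
  assert (HXa : incl Xa Phi).
  { unfold Xa. destruct (logic_eq_dec L CL); [apply incl_cons; [exact HB |] |]; apply incl_nil_l. }
  assert (HXaCL : L = CL -> Xa = [B]).
  { intro HL. unfold Xa. destruct (logic_eq_dec L CL); [reflexivity | contradiction]. }
  destruct (step_witness G [B] Xa (A, true) HG HA HXa) as (T & HT & HAT & HavB).
  - intros HL. rewrite (HXaCL HL). apply incl_refl.
  - intros Y HY HAY. apply HnAB, (in_iff_proves _ _ (proj2 HG) (Phi_ext_Phi _ HAB)).
    apply (prov_imp_rhd_box_l _ _ _ _ HAY), prov_imp_J3.
    + refine (prov_imp_R1 _ _ _ _ _ HY). unfold big_or. taut_tac.
    + apply prov_imp_rhd_big_or_l. intros D HD. unfold Xa in HD.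
      destruct (logic_eq_dec L CL) as [HL |]; [destruct HD as [<- | []] | destruct HD].
      apply prov_imp_const, prov_rhd_refl_CL, HL.
  - exists T. split; [exact HT | split; [exact HAT |]].
    intro HL. apply HavB. rewrite (HXaCL HL). left. reflexivity.
Qed.

Lemma rhd_sibling G A B X : atom G -> In (Rhd A B) G -> In (Rhd A B) Phi -> incl X Phi ->
  consistent (And (charf G) (Neg (Rhd A (big_or X)))) ->
  exists T, step G T X /\ In B T /\ (forall D, In D X -> ~ In D T).
Proof.
  intros HG HABG HAB HX HGX. destruct (Phi_Rhd _ _ HAB) as [HA HB].
  destruct (step_witness G X X (B, true) HG HB HX (fun _ => incl_refl _))
    as (T & HT & HBT & HavX); [| exists T; auto].
  intros Y HY HBY. apply HGX.
  assert (HGAB : proves G (Rhd A B)) by exact (proves_in _ _ (Phi_ext_Phi _ HAB) HABG).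
  refine (prov_taut_mp _ _ _ (prov_imp_J2p _ _ _ _ (prov_imp_rhd_box_r _ _ _ _ HGAB HBY) HY)).
  taut_tac.
Qed.

(** * The path model *)

Definition node : Type := (list formula * list formula)%type.

(* Worlds are paths from the root, newest node first.  A node is an atom together with a tag:
   the formulas that its [S]-successors among its siblings must avoid. *)
Fixpoint is_path (p : list node) : Prop :=
  match p with
  | [] => False
  | n :: p' => In (snd n) (sublists Phi) /\
      match p' with
      | [] => atom (fst n)
      | m :: _ => step (fst m) (fst n) (snd n) /\ is_path p'
      end
  end.

Definition label (p : list node) : list formula := match p with n :: _ => fst n | [] => [] end.

Lemma path_nonnil p : is_path p -> p <> [].
Proof. destruct p; simpl; [tauto | discriminate]. Qed.

Lemma path_atom p : is_path p -> atom (label p).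
Proof.
  destruct p as [|n [|m p]]; simpl; try tauto.
  intros (_ & Hst & _). exact (step_atom _ _ _ Hst).
Qed.

Lemma path_cons p T X :
  is_path p -> step (label p) T X -> In X (sublists Phi) -> is_path ((T, X) :: p).
Proof. destruct p; simpl; tauto. Qed.

Lemma path_tail n p : is_path (n :: p) -> p <> [] -> is_path p.
Proof. destruct p; simpl; tauto. Qed.

Lemma path_app e p : is_path (e ++ p) -> p <> [] -> is_path p.
Proof.
  induction e as [|n e IH]; intros Hp Hnil; [exact Hp |].
  apply IH; [apply (path_tail n) | exact Hnil].
  - exact Hp.
  - destruct e; [exact Hnil | discriminate].
Qed.

Lemma path_step n p : is_path (n :: p) -> p <> [] -> step (label p) (fst n) (snd n).
Proof. destruct p; simpl; tauto. Qed.

Lemma path_tag n p : is_path (n :: p) -> incl (snd n) Phi.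
Proof. intros [H _]. apply sublists_incl, H. Qed.

Lemma step_box G T X C : atom G -> step G T X -> In (Box C) G -> In (Box C) T.
Proof.
  intros HG HGT HC.
  assert (HCext : In (Box C) Phi_ext) by exact (atom_incl _ HG _ HC).
  apply (in_iff_proves _ _ (proj2 (step_atom _ _ _ HGT)) HCext).
  apply (proves_box_succ G); [exact (step_dia _ _ _ HGT) | apply proves_in; assumption |].
  apply decides_Phi_ext, HCext.
Qed.

Lemma path_box C e p : (forall Sl, decides Sl C) -> is_path (e ++ p) -> p <> [] ->
  In (Box C) (label p) -> In (Box C) (label (e ++ p)) /\ (e <> [] -> proves (label (e ++ p)) C).
Proof.
  intros HC. induction e as [|n e IH]; intros Hp Hnil HCp; [split; [exact HCp | contradiction] |].
  simpl in Hp |- *. assert (Hnil' : e ++ p <> []) by (destruct e; [exact Hnil | discriminate]).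
  assert (Hp' := path_tail _ _ Hp Hnil'). assert (Hst := path_step _ _ Hp Hnil').
  destruct (IH Hp' Hnil HCp) as [HCep _]. split.
  - exact (step_box _ _ _ _ (path_atom _ Hp') Hst HCep).
  - intros _. apply (proves_succ (label (e ++ p))); [exact (step_dia _ _ _ Hst) | | apply HC].
    apply proves_in; [exact (atom_incl _ (path_atom _ Hp') _ HCep) | exact HCep].
Qed.

Definition box_count (Sl : list formula) : nat :=
  length (filter (fun E => is_box E && if in_dec formula_eq_dec E Sl then true else false) Phi_ext).

Lemma step_box_count G T X : atom G -> step G T X -> box_count G < box_count T.
Proof.
  intros HG HGT. apply filter_length_lt.
  - intros [| | | | | | C |] _; simpl; try discriminate.
    destruct (in_dec formula_eq_dec (Box C) G) as [HCG |]; [| discriminate].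
    destruct (in_dec formula_eq_dec (Box C) T) as [| []]; [reflexivity |].
    exact (step_box _ _ _ _ HG HGT HCG).
  - destruct (step_new_box _ _ _ HGT) as (C & HCT & HCG). exists (Box C). simpl.
    destruct (in_dec formula_eq_dec (Box C) T); [| contradiction].
    destruct (in_dec formula_eq_dec (Box C) G); [contradiction |].
    split; [exact (atom_incl _ (step_atom _ _ _ HGT) _ HCT) | split; reflexivity].
Qed.

Lemma path_length p : is_path p -> length p <= length Phi_ext + 1.
Proof.
  intro Hp. enough (length p <= box_count (label p) + 1) by
    (pose proof (filter_length_le (fun E => is_box E && if in_dec formula_eq_dec E (label p)
       then true else false) Phi_ext); unfold box_count in *; lia).
  induction p as [|n [|m p] IH]; [contradiction | simpl; lia |].
  destruct Hp as (_ & Hst & Hp). specialize (IH Hp).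
  pose proof (step_box_count _ _ _ (path_atom _ Hp) Hst). simpl in *. lia.
Qed.

(* [y S z] holds when [z] is a sibling of [y] whose larger tag it avoids, when [z] is a child of
   a strict ancestor of the parent of [y], and, for CL only, when [z = y]. *)
Definition path_S (q r : list node) : Prop :=
  match q, r with
  | nq :: pq, nr :: pr =>
      (pr = pq /\ incl (snd nq) (snd nr) /\ (forall D, In D (snd nr) -> ~ In D (fst nr)))
      \/ strict_ext pr pq
  | _, _ => False
  end \/ (L = CL /\ q = r).

Definition world : Type := {p : list node | is_path p}.

Definition model : frame :=
  Frame world (fun x y => strict_ext (proj1_sig x) (proj1_sig y))
    (fun x y => path_S (proj1_sig x) (proj1_sig y)).

Definition model_val (n : nat) (w : W model) : Prop := In (Var n) (label (proj1_sig w)).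

Lemma model_R_wf : well_founded (fun x y => R model y x).
Proof.
  apply (well_founded_lt_compat _ (fun x : world => length Phi_ext + 1 - length (proj1_sig x))).
  intros [x Hx] [y Hy] Hxy%strict_ext_length. simpl in *.
  pose proof (path_length x Hx). lia.
Qed.

Lemma path_S_trans q r s : path_S q r -> path_S r s -> path_S q s.
Proof.
  unfold path_S.
  intros [Hqr | [HL <-]] [Hrs | [_ <-]]; [left | left; exact Hqr | left; exact Hrs | right; auto].
  destruct q as [|nq pq], r as [|nr pr], s as [|ns ps]; try contradiction.
  destruct Hqr as [(-> & Hqr & _) | Hqr], Hrs as [(-> & Hrs & Hs) | Hrs].
  - left. split; [reflexivity | split; [exact (incl_tran Hqr Hrs) | exact Hs]].
  - right. exact Hrs.
  - right. exact Hqr.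
  - right. exact (strict_ext_trans _ _ _ Hrs Hqr).
Qed.

Lemma model_L_frame : inhabited world -> L_frame L model.
Proof.
  intro Hw. split; [split; [exact Hw | split; [| exact model_R_wf]] |].
  - intros x y z. apply strict_ext_trans.
  - assert (HS : transitive (S model)) by (intros x y z; apply path_S_trans).
    destruct L eqn:HL; [exact HS | split; [| exact HS]].
    intro x. right. split; [exact HL | reflexivity].
Qed.

Lemma model_finite : finite_frame model.
Proof.
  destruct (bounded_lists_finite (list_prod (sublists Phi_ext) (sublists Phi)) (length Phi_ext + 1))
    as [ls Hls].
  apply (sig_finite _ ls). intros [p Hp]. apply Hls; [| exact (path_length p Hp)]. simpl.
  clear Hls. induction p as [|[T X] p IH]; [apply incl_nil_l |]. apply incl_cons.
  - apply in_prod; [| apply Hp].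
    destruct p; [apply Hp | apply (step_atom _ _ _ (proj1 (proj2 Hp)))].
  - destruct p; [apply incl_nil_l |]. apply IH, (path_tail _ _ Hp). discriminate.
Qed.

(** * Truth lemma and completeness *)

Lemma in_imp Sl A B : consistent (charf Sl) -> In A Phi_ext -> In B Phi_ext ->
  In (Imp A B) Phi_ext -> (In (Imp A B) Sl <-> (In A Sl -> In B Sl)).
Proof.
  intros HC HA HB HAB. rewrite !(in_iff_proves Sl _ HC) by assumption. split.
  - intros HAB' HA'. refine (prov_imp_taut_mp2 _ _ _ _ _ HAB' HA'). taut_tac.
  - intro H. destruct (decides_Phi_ext Sl A HA) as [HA' | HnA].
    + refine (prov_imp_taut_mp _ _ _ _ (H HA')). taut_tac.
    + refine (prov_imp_taut_mp _ _ _ _ HnA). taut_tac.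
Qed.

Lemma in_or Sl A B : consistent (charf Sl) -> In A Phi_ext -> In B Phi_ext ->
  In (Or A B) Phi_ext -> (In (Or A B) Sl <-> (In A Sl \/ In B Sl)).
Proof.
  intros HC HA HB HAB. rewrite !(in_iff_proves Sl _ HC) by assumption. split.
  - intro H. destruct (decides_Phi_ext Sl A HA) as [HA' | HnA]; [left; exact HA' |].
    destruct (decides_Phi_ext Sl B HB) as [HB' | HnB]; [right; exact HB' |].
    exfalso. apply HC. refine (prov_taut_mp3 _ _ _ _ _ H HnA HnB). taut_tac.
  - intros [H | H]; refine (prov_imp_taut_mp _ _ _ _ H); taut_tac.
Qed.

Lemma in_and Sl A B : consistent (charf Sl) -> In A Phi_ext -> In B Phi_ext ->
  In (And A B) Phi_ext -> (In (And A B) Sl <-> (In A Sl /\ In B Sl)).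
Proof.
  intros HC HA HB HAB. rewrite !(in_iff_proves Sl _ HC) by assumption. split.
  - intro H. split; refine (prov_imp_taut_mp _ _ _ _ H); taut_tac.
  - intros [HA' HB']. refine (prov_imp_taut_mp2 _ _ _ _ _ HA' HB'). taut_tac.
Qed.

Notation forces_model := (forces model model_val).
Notation wlabel w := (label (proj1_sig w)).

Lemma truth_box C : In (Box C) Phi ->
  (forall w, forces_model w C <-> In C (wlabel w)) ->
  forall w, forces_model w (Box C) <-> In (Box C) (wlabel w).
Proof.
  intros HBC IH [p Hp]. assert (HC := Phi_Box _ HBC). simpl. split.
  - intro Hforces. apply NNPP. intro HnBC.
    destruct (box_witness _ _ (path_atom _ Hp) HBC HnBC) as (T & HT & HCT).
    assert (Hq : is_path ((T, []) :: p)) by exact (path_cons _ _ _ Hp HT (sublists_nil _)).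
    assert (HR : strict_ext p ((T, []) :: p))
      by (exists [(T, [])]; split; [discriminate | reflexivity]).
    exact (HCT (proj1 (IH (exist _ _ Hq)) (Hforces (exist _ _ Hq) HR))).
  - intros HBCp [q Hq] (e & He & Hqe). simpl in Hqe. subst q.
    apply (proj2 (IH (exist _ _ Hq))). simpl.
    destruct (path_box C e p (fun Sl => decides_Phi_ext Sl C (Phi_ext_Phi _ HC)) Hq
      (path_nonnil _ Hp) HBCp) as [_ HqC].
    apply (in_iff_proves _ _ (proj2 (path_atom _ Hq)) (Phi_ext_Phi _ HC)), HqC, He.
Qed.

Lemma rhd_bot_consistent e p A : is_path (e ++ p) -> p <> [] -> e <> [] -> In A Phi ->
  In A (label (e ++ p)) -> consistent (And (charf (label p)) (Neg (Rhd A Bot))).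
Proof.
  intros Hq Hp He HA HAq. apply consistent_and_neg. intro HAbot.
  apply prov_imp_rhd_bot_box_neg in HAbot.
  (* [psi] is [A] as a conjunction of literals, so [Box (Neg psi)] is in [Phi_ext] and is
     inherited along the path. *)
  set (l := canon [(A, true)]). set (psi := lits_and l).
  assert (Hl : incl l lits) by exact (sublists_incl _ _ (canon_sublists _)).
  assert (Hpsi_A : tautology (Imp psi A)).
  { exact (lits_and_elim _ (A, true) (incl_canon _ (incl_cons (lits_Phi _ _ HA) (incl_nil_l _))
      _ (or_introl eq_refl))). }
  assert (HA_psi : tautology (Imp A psi)).
  { intro v. generalize (lits_and_incl _ _ (canon_incl [(A, true)]) v). fold l psi. simpl.
    unfold lit_formula. simpl.
    destruct (tval v A), (tval v psi); auto. }
  assert (Hpsi : In (Box (Neg psi)) Phi_ext) by exact (Phi_ext_box_neg _ (canon_sublists _)).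
  assert (Hpsi_p : In (Box (Neg psi)) (label p)).
  { apply (in_iff_proves _ _ (proj2 (path_atom _ (path_app _ _ Hq Hp))) Hpsi).
    exact (prov_imp_box_taut_mp _ _ _ (tautology_contra _ _ Hpsi_A) HAbot). }
  destruct (path_box (Neg psi) e p (fun Sl => decides_neg _ _ (decides_lits_and Sl l Hl))
    Hq Hp Hpsi_p) as [_ Hnpsi].
  assert (HqA : proves (label (e ++ p)) A) by exact (proves_in _ _ (Phi_ext_Phi _ HA) HAq).
  exact (not_consistent_contra _ _ _ (prov_imp_taut_mp _ _ _ HA_psi HqA) (Hnpsi He)
    (proj2 (path_atom _ Hq))).
Qed.

Lemma truth_rhd_forces A B : In (Rhd A B) Phi ->
  (forall w, forces_model w A <-> In A (wlabel w)) ->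
  (forall w, forces_model w B <-> In B (wlabel w)) ->
  forall w, forces_model w (Rhd A B) -> In (Rhd A B) (wlabel w).
Proof.
  intros HAB IHA IHB [p Hp] Hforces. apply NNPP. intro HnAB.
  destruct (rhd_witness _ _ _ (path_atom _ Hp) HAB HnAB) as (T & HT & HAT & HBT).
  assert (Hy : is_path ((T, [B]) :: p)).
  { apply (path_cons _ _ _ Hp HT), sublists_single, (Phi_Rhd _ _ HAB). }
  destruct (Hforces (exist _ _ Hy)) as ([z Hz] & (e & He & Hze) & Hyz & HBz).
  - exists [(T, [B])]. split; [discriminate | reflexivity].
  - exact (proj2 (IHA (exist _ _ Hy)) HAT).
  - apply (IHB (exist _ _ Hz)) in HBz. simpl in Hze, Hyz, HBz. subst z.
    destruct e as [|[T' X'] e]; [contradiction |]. simpl in HBz.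
    destruct Hyz as [[(_ & Hincl & Havoid) | Hext] | [HL Heq]].
    + exact (Havoid B (Hincl B (or_introl eq_refl)) HBz).
    + apply strict_ext_length in Hext. rewrite length_app in Hext. lia.
    + injection Heq as -> _. exact (HBT HL HBz).
Qed.

Lemma truth_rhd_in A B : In (Rhd A B) Phi ->
  (forall w, forces_model w A <-> In A (wlabel w)) ->
  (forall w, forces_model w B <-> In B (wlabel w)) ->
  forall w, In (Rhd A B) (wlabel w) -> forces_model w (Rhd A B).
Proof.
  intros HAB IHA IHB [p Hp] HABp [y Hy] (e & He & Hye) HAy. simpl in HABp, Hye. subst y.
  apply (IHA (exist _ _ Hy)) in HAy. simpl in HAy.
  destruct (Phi_Rhd _ _ HAB) as [HA HB]. assert (Hpnil := path_nonnil _ Hp).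
  assert (Hp_atom := path_atom _ Hp).
  destruct e as [|[T0 X0] e]; [contradiction |]. destruct e as [|n e].
  - assert (Hst := path_step _ _ Hy Hpnil).
    destruct (rhd_sibling _ _ _ X0 Hp_atom HABp HAB (path_tag _ _ Hy) (step_rhd _ _ _ Hst A HA HAy))
      as (T & HT & HBT & HavX0).
    assert (Hz : is_path ((T, X0) :: p)) by exact (path_cons _ _ _ Hp HT (proj1 Hy)).
    exists (exist _ _ Hz). split; [| split].
    + exists [(T, X0)]. split; [discriminate | reflexivity].
    + left. left. split; [reflexivity | split; [apply incl_refl | exact HavX0]].
    + apply (IHB (exist _ _ Hz)), HBT.
  - assert (Hbot := rhd_bot_consistent ((T0, X0) :: n :: e) p A Hy Hpnil
      ltac:(discriminate) HA HAy).
    destruct (rhd_sibling _ _ _ [] Hp_atom HABp HAB (incl_nil_l _) Hbot) as (T & HT & HBT & _).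
    assert (Hz : is_path ((T, []) :: p)) by exact (path_cons _ _ _ Hp HT (sublists_nil _)).
    exists (exist _ _ Hz). split; [| split].
    + exists [(T, [])]. split; [discriminate | reflexivity].
    + left. right. exists (n :: e). split; [discriminate | reflexivity].
    + apply (IHB (exist _ _ Hz)), HBT.
Qed.

Lemma truth_lemma E : In E Phi -> forall w, forces_model w E <-> In E (wlabel w).
Proof.
  induction E as [k | | | A IHA B IHB | A IHA B IHB | A IHA B IHB | C IHC | A IHA B IHB];
    intros HE; try (intros [p Hp]; assert (HC := proj2 (path_atom _ Hp)); simpl).
  - reflexivity.
  - split; [intros _ | tauto]. apply (in_iff_proves _ _ HC (Phi_ext_Phi _ HE)). taut_tac.
  - split; [intros [] |]. intro H. apply (in_iff_proves _ _ HC (Phi_ext_Phi _ HE)) in H.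
    apply HC, H.
  - destruct (Phi_Imp _ _ HE) as [HA HB].
    rewrite (in_imp _ _ _ HC (Phi_ext_Phi _ HA) (Phi_ext_Phi _ HB) (Phi_ext_Phi _ HE)).
    rewrite (IHA HA (exist _ _ Hp)), (IHB HB (exist _ _ Hp)). reflexivity.
  - destruct (Phi_Or _ _ HE) as [HA HB].
    rewrite (in_or _ _ _ HC (Phi_ext_Phi _ HA) (Phi_ext_Phi _ HB) (Phi_ext_Phi _ HE)).
    rewrite (IHA HA (exist _ _ Hp)), (IHB HB (exist _ _ Hp)). reflexivity.
  - destruct (Phi_And _ _ HE) as [HA HB].
    rewrite (in_and _ _ _ HC (Phi_ext_Phi _ HA) (Phi_ext_Phi _ HB) (Phi_ext_Phi _ HE)).
    rewrite (IHA HA (exist _ _ Hp)), (IHB HB (exist _ _ Hp)). reflexivity.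
  - exact (truth_box C HE (IHC (Phi_Box _ HE)) (exist _ p Hp)).
  - destruct (Phi_Rhd _ _ HE) as [HA HB]. split.
    + apply (truth_rhd_forces A B HE (IHA HA) (IHB HB) (exist _ p Hp)).
    + apply (truth_rhd_in A B HE (IHA HA) (IHB HB) (exist _ p Hp)).
Qed.

End Canonical_model.

Fixpoint subformulas (A : formula) : list formula :=
  A :: match A with
       | Imp B C | Or B C | And B C | Rhd B C => subformulas B ++ subformulas C
       | Box B => subformulas B
       | _ => []
       end.

Lemma subformulas_refl A : In A (subformulas A).
Proof. destruct A; left; reflexivity. Qed.

Lemma subformulas_trans A E F :
  In E (subformulas A) -> In F (subformulas E) -> In F (subformulas A).
Proof.
  induction A; simpl; intros [<- | HE] HF; try exact HF; try contradiction;
    try (apply in_app_or in HE as [HE | HE]); right; auto using in_or_app.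
Qed.

Lemma subformulas_Imp A B C :
  In (Imp B C) (subformulas A) -> In B (subformulas A) /\ In C (subformulas A).
Proof.
  intro H. split; apply (subformulas_trans _ _ _ H); right; apply in_or_app;
    auto using subformulas_refl.
Qed.

Lemma subformulas_Or A B C :
  In (Or B C) (subformulas A) -> In B (subformulas A) /\ In C (subformulas A).
Proof.
  intro H. split; apply (subformulas_trans _ _ _ H); right; apply in_or_app;
    auto using subformulas_refl.
Qed.

Lemma subformulas_And A B C :
  In (And B C) (subformulas A) -> In B (subformulas A) /\ In C (subformulas A).
Proof.
  intro H. split; apply (subformulas_trans _ _ _ H); right; apply in_or_app;
    auto using subformulas_refl.
Qed.

Lemma subformulas_Rhd A B C :
  In (Rhd B C) (subformulas A) -> In B (subformulas A) /\ In C (subformulas A).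
Proof.
  intro H. split; apply (subformulas_trans _ _ _ H); right; apply in_or_app;
    auto using subformulas_refl.
Qed.

Lemma subformulas_Box A B : In (Box B) (subformulas A) -> In B (subformulas A).
Proof. intro H. apply (subformulas_trans _ _ _ H). right. apply subformulas_refl. Qed.

Theorem completeness L A : ~ prov L A ->
  exists F, L_frame L F /\ finite_frame F /\ ~ valid_in F A.
Proof.
  intro HnA. set (Phi := subformulas A).
  assert (HPhiA : In A Phi) by apply subformulas_refl.
  assert (HnA' : consistent L (Neg A)).
  { intro H. apply HnA. refine (prov_taut_mp _ _ _ H). taut_tac. }
  destruct (lindenbaum_atom L Phi _ HnA') as (Sl & HSl & HSlA).
  assert (Hroot : is_path L Phi [(Sl, [])]).
  { split; [apply sublists_nil | split; [exact HSl |]].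
    refine (consistent_mono _ _ _ _ HSlA). taut_tac. }
  assert (HnASl : ~ In A Sl).
  { intro H. apply HSlA.
    apply (in_iff_proves L Phi _ _ (proj2 (path_atom _ _ _ Hroot)) (Phi_ext_Phi _ _ HPhiA)) in H.
    refine (prov_taut_mp _ _ _ H). taut_tac. }
  exists (model L Phi). split; [| split].
  - apply model_L_frame. constructor. exact (exist _ _ Hroot).
  - apply model_finite.
  - intro Hvalid. apply HnASl.
    refine (proj1 (truth_lemma L Phi (subformulas_Imp A) (subformulas_Or A) (subformulas_And A)
      (subformulas_Rhd A) (subformulas_Box A) A HPhiA (exist _ _ Hroot)) (Hvalid _ _)).
Qed.

Theorem theorem3p2 : forall (L : logic) (A : formula),
  (prov L A <-> (forall F : frame, L_frame L F -> valid_in F A)) /\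
  ((forall F : frame, L_frame L F -> valid_in F A) <->
   (forall F : frame, L_frame L F -> finite_frame F -> valid_in F A)).
Proof.
  intros L A.
  assert (Hfinite : (forall F, L_frame L F -> finite_frame F -> valid_in F A) -> prov L A).
  { intro H. apply NNPP. intro HnA.
    destruct (completeness L A HnA) as (F & HF & Hfin & HnF). exact (HnF (H F HF Hfin)). }
  split; split.
  - intros HA F HF. exact (soundness L A HA F HF).
  - intro H. apply Hfinite. intros F HF _. exact (H F HF).
  - intros H F HF _. exact (H F HF).
  - intros H F HF. exact (soundness L A (Hfinite H) F HF).
Qed.
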